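(* Let $\varphi$ be an instance of 2-Clause 3-SAT and let $G(\varphi)$ be the graph constructed from $\varphi$ as described in the context. If $\mathrm{wcol}_2(G(\varphi)) \leq 5$, then $\varphi$ has a satisfying assignment.
   Context: 2-Clause 3-SAT: given a CNF formula $\varphi$ with clauses $c_1,\dots,c_m$ over variables $x_1,\dots,x_n$ in which each clause contains at most 3 literals and each literal ($x_j$ or $\overline{x}_j$) appears in exactly 2 clauses, decide whether $\varphi$ is satisfiable. It is assumed throughout that no variable appears twice in a single clause and that there are no clauses with a single literal (so each clause has 2 or 3 literals). Construction of $G(\varphi)$: for each clause $c_i$ create 6 vertices $u_i^1,\dots,u_i^6$. If $c_i$ contains only 2 literals, add 2 more vertices $f_i, f'_i$, each adjacent to all of $u_i^1,\dots,u_i^6$. For each variable $x_j$ create two vertices $v_j$ and $v'_j$ (for the literals $x_j$ and $\overline{x}_j$) joined by an edge. For each clause $c_i$ containing the literal $x_j$, add an edge from $v_j$ to each of $u_i^1,\dots,u_i^6$; for each clause $c_i$ containing $\overline{x}_j$, add an edge from $v'_j$ to each of $u_i^1,\dots,u_i^6$. Weak coloring numbers: for a graph $G=(V,E)$ and a total order $\sigma$ of $V$, a vertex $v\neq u$ is weakly $r$-reachable from $u$ if $u <_\sigma v$ and there is a $u$–$v$ path $P$ of length at most $r$ such that every vertex $p$ of $P$ other than $u,v$ satisfies $p <_\sigma v$. Let $\mathrm{wreach}_r(u,G_\sigma)$ be the set of such $v$. Then $\mathrm{wcol}_r(G)=\min_\sigma \max_{u\in V}|\mathrm{wreach}_r(u,G_\sigma)|$,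 the minimum over all total orders of $V$. *)

From mathcomp Require Import all_boot all_fingroup.
Set Implicit Arguments. Unset Strict Implicit. Unset Printing Implicit Defensive.

(* Variables x_0..x_{n-1} are 'I_n; a literal is (j, b) : 'I_n * bool, where
   (j, true) is x_j and (j, false) is its negation. *)
Definition lit (n : nat) := ('I_n * bool)%type.

Definition two_clause_3sat (n m : nat) (cl : 'I_m -> {set lit n}) : Prop :=
  [/\
      (forall i, 2 <= #|cl i| <= 3),
      (forall i (j : 'I_n), ~~ (((j, true) \in cl i) && ((j, false) \in cl i)))
    &
      (forall l : lit n, #|[set i | l \in cl i]| = 2)].

Definition satisfiable (n m : nat) (cl : 'I_m -> {set lit n}) : Prop :=
  exists a : 'I_n -> bool, forall i, exists2 l, l \in cl i & a l.1 = l.2.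

(* raw vertices:
   inl (inl (i, k))  = u_i^{k+1}   (k : 'I_6)
   inl (inr (i, b))  = f_i (b = false) / f'_i (b = true)  (only if |c_i| = 2)
   inr (j, b)        = v_j (b = true) / v'_j (b = false) *)
Definition rawV (n m : nat) :=
  (('I_m * 'I_6) + ('I_m * bool) + ('I_n * bool))%type.

Definition vok (n m : nat) (cl : 'I_m -> {set lit n}) (x : rawV n m) : bool :=
  match x with
  | inl (inr (i, _)) => #|cl i| == 2
  | _ => true
  end.

Definition rawadj (n m : nat) (cl : 'I_m -> {set lit n}) (x y : rawV n m) : bool :=
  match x, y with
  | inl (inl (i, _)), inl (inr (i', _)) => i == i'
  | inl (inr (i, _)), inl (inl (i', _)) => i == i'
  | inl (inl (i, _)), inr l => l \in cl i
  | inr l, inl (inl (i, _)) => l \in cl i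
  | inr (j, b), inr (j', b') => (j == j') && (b != b')
  | _, _ => false
  end.

Definition GV (n m : nat) (cl : 'I_m -> {set lit n}) : finType :=
  {x : rawV n m | vok cl x}.

Definition Gadj (n m : nat) (cl : 'I_m -> {set lit n}) : rel (GV cl) :=
  fun x y => rawadj cl (val x) (val y).

(* A total order sigma of V is given by a permutation s of V:
   u <_s v  iff  the position of s u in enum V is smaller than that of s v.
   Every total order of V arises this way. *)
Definition ltord (V : finType) (s : {perm V}) (u v : V) : bool :=
  (enum_rank (s u) < enum_rank (s v))%N.

(* v is weakly r-reachable from u: u <_s v and there is a u-v path
   u = p_0, p_1, ..., p_l = v (l <= r, vertices pairwise distinct) whose inner
   vertices are all <_s v. *)
Definition wreach_path (V : finType) (e : rel V) (s : {perm V}) (u v : V)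
    (p : seq V) : bool :=
  [&& path e u p, last u p == v, uniq (u :: p)
    & all (fun x => ltord s x v) (behead (belast u p))].

Definition wreach (V : finType) (e : rel V) (r : nat) (s : {perm V}) (u : V)
    : {set V} :=
  [set v | [&& v != u, ltord s u v &
     [exists l : 'I_r.+1, exists p : l.-tuple V, wreach_path e s u v p]]].

(* wcol_r(G) = min over orders of max over u of |wreach_r(u)|.
   (#|V| is a harmless neutral element: every value is < #|V| and the
   range of permutations is nonempty.) *)
Definition wcol (V : finType) (e : rel V) (r : nat) : nat :=
  \big[minn/#|V|]_(s : {perm V}) \max_(u : V) #|wreach e r s u|.

(* Fix an order in which every vertex weakly 2-reaches at most five vertices, and make x_j
   true iff v'_j precedes v_j; so a falsified literal precedes its complement.  Let a be the
   first of the six vertices u_i^k of a clause c_i.  A common neighbour of the u_i^k placed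
   before a would weakly 1-reach all six of them, so every neighbour of a comes after a.
   If c_i were falsified, a would then weakly 2-reach its literal vertices, their complements
   (along a - l - l', increasing) and f_i, f'_i: 2*3 or 2*2+2 = 6 vertices. *)
From mathcomp Require Import all_boot all_fingroup zify.
Set Implicit Arguments. Unset Strict Implicit. Unset Printing Implicit Defensive.

Section WeakReach.
Variables (V : finType) (e : rel V) (s : {perm V}).

Lemma ltord_irr u : ltord s u u = false.
Proof. by rewrite /ltord ltnn. Qed.

Lemma ltord_trans u v w : ltord s u v -> ltord s v w -> ltord s u w.
Proof. exact: ltn_trans. Qed.

Lemma ltord_neq u v : ltord s u v -> u != v.
Proof. by apply: contraTneq => ->; rewrite ltord_irr. Qed.

Lemma ltord_total u v : u != v -> ltord s u v || ltord s v u.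
Proof.
move=> neq_uv; rewrite /ltord -neq_ltn; apply: contra neq_uv => /eqP eq_rk.
by apply/eqP; apply: (@perm_inj _ s); apply/enum_rank_inj/val_inj.
Qed.

Lemma wreach_edge u v : e u v -> ltord s u v -> v \in wreach e 2 s u.
Proof.
move=> euv luv; rewrite inE eq_sym ltord_neq //= luv.
apply/existsP; exists (@Ordinal 3 1 erefl); apply/existsP; exists [tuple v].
by rewrite /wreach_path /= euv eqxx inE ltord_neq.
Qed.

Lemma wreach_increasing_path2 u x v :
  e u x -> e x v -> ltord s u x -> ltord s x v -> v \in wreach e 2 s u.
Proof.
move=> eux exv lux lxv; have luv := ltord_trans lux lxv.
rewrite inE eq_sym ltord_neq //= luv.
apply/existsP; exists (@Ordinal 3 2 erefl); apply/existsP; exists [tuple x; v].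
by rewrite /wreach_path /= eux exv lxv eqxx !inE negb_or !ltord_neq.
Qed.

End WeakReach.

Lemma wcol_attained (V : finType) (e : rel V) (r : nat) :
  exists s : {perm V}, forall u, #|wreach e r s u| <= wcol e r.
Proof.
pose width s := \max_(u : V) #|wreach e r s u|.
have [s _ width_min] := @arg_minnP _ (1%g : {perm V}) predT width isT.
exists s => u; apply: leq_trans (leq_bigmax (F := fun v => #|wreach e r s v|) u) _.
apply: (big_ind (fun k => width s <= k)) => [|x y le_x le_y|s' _]; last exact: width_min.
- by apply/bigmax_leqP => v _; apply: max_card.
- by rewrite leq_min le_x le_y.
Qed.

Definition lit_neg n (l : lit n) : lit n := (l.1, ~~ l.2).

Lemma lit_negK n : involutive (@lit_neg n).
Proof. by case=> j b; rewrite /lit_neg negbK. Qed.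

Lemma card_setU_lit_neg n (S : {set lit n}) :
  (forall j, ~~ (((j, true) \in S) && ((j, false) \in S))) ->
  #|S :|: [set lit_neg l | l in S]| = (2 * #|S|)%N.
Proof.
move=> consistent.
have disjoint_neg : S :&: [set lit_neg l | l in S] = set0.
  rewrite (can_imset_pre _ (@lit_negK n)); apply/setP=> -[j b].
  rewrite !inE /lit_neg /=; have := consistent j.
  by case: b => /negPf //; rewrite andbC.
have := cardsUI S [set lit_neg l | l in S]; rewrite disjoint_neg cards0 addn0 => ->.
by rewrite card_imset ?mul2n ?addnn //; apply: can_inj (@lit_negK n).
Qed.

Section ClauseGadget.
Variables (n m : nat) (cl : 'I_m -> {set lit n}).

Definition lit_vertex (l : lit n) : GV cl := exist (vok cl) (inr l) isT.

Definition clause_vertex (i : 'I_m) (k : 'I_6) : GV cl :=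
  exist (vok cl) (inl (inl (i, k))) isT.

Definition filler_vertex (i : 'I_m) (b : bool) (short_i : #|cl i| == 2) : GV cl :=
  exist (vok cl) (inl (inr (i, b))) short_i.
Arguments filler_vertex : clear implicits.

Lemma lit_vertex_inj : injective lit_vertex.
Proof. by move=> l l' /(congr1 val) [->]. Qed.

Lemma clause_vertex_inj i : injective (clause_vertex i).
Proof. by move=> k k' /(congr1 val) [->]. Qed.

Lemma Gadj_sym : symmetric (@Gadj n m cl).
Proof.
move=> [[[[i k]|[i b]]|[j b]] ?] [[[[i' k']|[i' b']]|[j' b']] ?];
  rewrite /Gadj /= ?(eq_sym i) //.
by rewrite (eq_sym j) (eq_sym b).
Qed.

Lemma Gadj_irr : irreflexive (@Gadj n m cl).
Proof. by move=> [[[[? ?]|[? ?]]|[? ?]] ?]; rewrite /Gadj /= ?eqxx ?andbF. Qed.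

Lemma Gadj_clause_vertex i k k' : Gadj (clause_vertex i k) =1 Gadj (clause_vertex i k').
Proof. by move=> [[[[? ?]|[? ?]]|[? ?]] ?]. Qed.

Lemma Gadj_clause_lit i k l : Gadj (clause_vertex i k) (lit_vertex l) = (l \in cl i).
Proof. by []. Qed.

Lemma Gadj_clause_filler i k b short_i : Gadj (clause_vertex i k) (filler_vertex i b short_i).
Proof. by rewrite /Gadj /= eqxx. Qed.

Lemma Gadj_lit_neg l : Gadj (lit_vertex l) (lit_vertex (lit_neg l)).
Proof. by case: l => j [] /=; rewrite /Gadj /= eqxx. Qed.

Variable s : {perm GV cl}.

Definition order_assignment (j : 'I_n) : bool :=
  ltord s (lit_vertex (j, false)) (lit_vertex (j, true)).

Lemma ltord_lit_neg l :
  order_assignment l.1 != l.2 -> ltord s (lit_vertex l) (lit_vertex (lit_neg l)).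
Proof.
case: l => j b /=; rewrite /order_assignment /lit_neg /=.
have neq_lits : lit_vertex (j, false) != lit_vertex (j, true).
  by apply/eqP => /lit_vertex_inj [].
by case: b; move: (ltord_total s neq_lits); case: ltord.
Qed.

Definition first_clause_index (i : 'I_m) : 'I_6 :=
  [arg min_(k < ord0) enum_rank (s (clause_vertex i k))].

Definition first_clause_vertex (i : 'I_m) : GV cl := clause_vertex i (first_clause_index i).

Lemma ltord_first_clause_vertex i k x :
  ltord s x (first_clause_vertex i) -> ltord s x (clause_vertex i k).
Proof.
rewrite /first_clause_vertex /first_clause_index; case: arg_minnP => // k0 _ min_k0 lt_x.
exact: leq_trans lt_x (min_k0 k isT).
Qed.

Hypothesis few_wreach : forall u, #|wreach (@Gadj n m cl) 2 s u| <= 5.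

Lemma first_clause_vertex_precedes_neighbours i x :
  Gadj (first_clause_vertex i) x -> ltord s (first_clause_vertex i) x.
Proof.
move=> adj_x; have neq_x : first_clause_vertex i != x.
  by apply: contraTneq adj_x => <-; rewrite Gadj_irr.
have /orP [//|lt_x] := ltord_total s neq_x; exfalso.
have clause_wreach : [set clause_vertex i k | k : 'I_6] \subset wreach (@Gadj n m cl) 2 s x.
  apply/subsetP => _ /imsetP [k _ ->]; apply: wreach_edge.
    by rewrite Gadj_sym (Gadj_clause_vertex _ _ (first_clause_index i)).
  exact: ltord_first_clause_vertex.
have := leq_trans (subset_leq_card clause_wreach) (few_wreach x).
by rewrite card_imset ?card_ord //; apply: clause_vertex_inj.
Qed.

Lemma falsified_clause_wreach i :
  (forall l, l \in cl i -> order_assignment l.1 != l.2) ->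
  lit_vertex @: (cl i :|: [set lit_neg l | l in cl i])
    \subset wreach (@Gadj n m cl) 2 s (first_clause_vertex i).
Proof.
move=> falsified; apply/subsetP => _ /imsetP [l' /setUP [l_in | /imsetP [l l_in ->]] ->].
  by apply/wreach_edge/first_clause_vertex_precedes_neighbours; rewrite Gadj_clause_lit.
apply: (wreach_increasing_path2 (x := lit_vertex l)); rewrite ?Gadj_clause_lit ?Gadj_lit_neg //.
  exact/first_clause_vertex_precedes_neighbours.
exact/ltord_lit_neg/falsified.
Qed.

Lemma order_assignment_satisfies i :
  2 <= #|cl i| <= 3 -> (forall j, ~~ (((j, true) \in cl i) && ((j, false) \in cl i))) ->
  exists2 l, l \in cl i & order_assignment l.1 = l.2.
Proof.
move=> size_i consistent_i.
have [/exists_inP [l l_in /eqP sat_l] | /exists_inPn falsified] :=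
  boolP [exists l in cl i, order_assignment l.1 == l.2]; first by exists l.
exfalso; set a := first_clause_vertex i.
set lits := lit_vertex @: (cl i :|: [set lit_neg l | l in cl i]).
have lits_wreach : lits \subset wreach (@Gadj n m cl) 2 s a := falsified_clause_wreach falsified.
have card_lits : #|lits| = (2 * #|cl i|)%N.
  by rewrite card_imset; [apply: card_setU_lit_neg | apply: lit_vertex_inj].
have [short_i | long_i] := boolP (#|cl i| == 2); last first.
  have := leq_trans (subset_leq_card lits_wreach) (few_wreach a).
  by rewrite card_lits; move: size_i long_i; clear; lia.
pose fillers := [set filler_vertex i false short_i; filler_vertex i true short_i].
have fillers_wreach : fillers \subset wreach (@Gadj n m cl) 2 s a.
  apply/subsetP => x; rewrite in_set2 => /orP [] /eqP ->;
    by apply/wreach_edge/first_clause_vertex_precedes_neighbours; apply: Gadj_clause_filler.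
have card_fillers : #|fillers| = 2.
  by rewrite cards2; case: eqP => // /(congr1 val) [].
have lits_fillers : lits :&: fillers = set0.
  by apply/setP => y; rewrite !inE; apply/negbTE/andP => -[/imsetP [l _ ->]]; rewrite -!val_eqE.
have : lits :|: fillers \subset wreach (@Gadj n m cl) 2 s a.
  by rewrite subUset lits_wreach fillers_wreach.
move=> /subset_leq_card /leq_trans /(_ (few_wreach a)).
have := cardsUI lits fillers.
by rewrite lits_fillers cards0 card_lits card_fillers (eqP short_i) addn0 => ->.
Qed.

End ClauseGadget.

Theorem lemma3p3 (n m : nat) (cl : 'I_m -> {set lit n}) :
  two_clause_3sat cl ->
  (wcol (@Gadj n m cl) 2 <= 5)%N ->
  satisfiable cl.
Proof.
move=> [clause_sizes consistent _] wcol_le5.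
have [s wreach_le_wcol] := wcol_attained (@Gadj n m cl) 2.
have few_wreach u : #|wreach (@Gadj n m cl) 2 s u| <= 5.
  exact: leq_trans (wreach_le_wcol u) wcol_le5.
exists (order_assignment s) => i.
exact: order_assignment_satisfies few_wreach i (clause_sizes i) (consistent i).
Qed.
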